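(* Consider a one-hidden-layer discrete-time LIF-SNN with direct encoding, latency $T$, input dimension $n_{\mathrm{in}}$ and $n_1$ hidden neurons, with arbitrary fixed temporal parameters $u(0)\in\mathbb{R}^{n_1}$, $\beta\in[0,1]$, $\vartheta>0$. For $k\in[n_1]$ let $\mathcal{A}_k$ be the family of parallel hyperplanes corresponding to the $k$-th hidden neuron. Then one can construct a weight matrix $W\in\mathbb{R}^{n_1\times n_{\mathrm{in}}}$ and a bias vector $b\in\mathbb{R}^{n_1}$ such that the families $\mathcal{A}_1,\dots,\mathcal{A}_{n_1}$ are in general position.
   Context: The hidden layer evolves, for input $x\in\mathbb{R}^{n_{\mathrm{in}}}$ and $t\in[T]$, as $s(t)=H(\beta u(t-1)+Wx+b-\vartheta\mathbf{1})$, $u(t)=\beta u(t-1)+Wx+b-\vartheta s(t)$, with $H$ the entrywise Heaviside function. This yields $s_k(t)=H\big(\langle w_k,x\rangle+b_k-g_{t-1}(s_k(1),\dots,s_k(t-1))\big)$, where $w_k$ is the $k$-th row of $W$ and $g_{t-1}(a_1,\dots,a_{t-1})=\frac{-\beta^t u_k(0)+\vartheta(1+\sum_{i=1}^{t-1}\beta^i a_{t-i})}{\sum_{i=0}^{t-1}\beta^i}$ for $(a_1,\dots,a_{t-1})\in\{0,1\}^{t-1}$. The family $\mathcal{A}_k$ consists of the hyperplanes $\{x:\langle w_k,x\rangle+b_k-g_{t-1}(a)=0\}$ for $t\in[T]$ and $a\in\{0,1\}^{t-1}$. A finite set of hyperplanes in $\mathbb{R}^d$ is in general position if the intersection of any $p$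 distinct elements is empty when $p>d$ and a $(d-p)$-dimensional affine subspace when $p\le d$; families $\mathcal{A}_1,\dots,\mathcal{A}_{n_1}$ of parallel hyperplanes are in general position if every choice of one hyperplane from each family forms a set in general position. *)

From HB Require Import structures.
From mathcomp Require Import all_boot all_order all_algebra.
From mathcomp Require Import reals.
Set Implicit Arguments. Unset Strict Implicit. Unset Printing Implicit Defensive.
Import Order.TTheory GRing.Theory Num.Theory.
Local Open Scope ring_scope.

(* Threshold g_{t-1}(a_1,...,a_{t-1}) for neuron k, where the time step is
   t = t'.+1 (t' : 'I_T is zero-based) and a is the spike history
   (a_1,...,a_{t-1}) stored as a t'-tuple with a_{j+1} = nth false a j.
   g = (-beta^t u_k(0) + theta (1 + sum_{i=1}^{t-1} beta^i a_{t-i}))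
        / sum_{i=0}^{t-1} beta^i.
   With i = t' - j, a_{t-i} = a_{j+1}. *)
Definition thr {R : realType} (beta theta u0k : R) (t' : nat) (a : seq bool) : R :=
  (- beta ^+ t'.+1 * u0k
     + theta * (1 + \sum_(j < t') beta ^+ (t' - j) * (nth false a j)%:R))
  / \sum_(i < t'.+1) beta ^+ i.

(* Index of a hyperplane of the family A_k: a time step t in [T] (zero-based
   t' : 'I_T, t = t'.+1) and a spike history a in {0,1}^{t-1}. *)
Definition hyp_index (T : nat) := {t : 'I_T & (nat_of_ord t).-tuple bool}.

Definition hyperplane {R : realType} (nin n1 T : nat)
  (u0 : 'cV[R]_n1) (beta theta : R) (W : 'M[R]_(n1, nin)) (b : 'cV[R]_n1)
  (k : 'I_n1) (h : hyp_index T) (x : 'cV[R]_nin) : Prop :=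
  \sum_(j < nin) W k j * x j 0 + b k 0
    - thr beta theta (u0 k 0) (nat_of_ord (projT1 h)) (projT2 h) = 0.

Definition affine_subspace_dim {R : realType} (d m : nat) (S : 'cV[R]_d -> Prop) : Prop :=
  exists (x0 : 'cV[R]_d) (B : 'M[R]_(m, d)), row_free B /\
    forall x, S x <-> exists y : 'rV[R]_m, x = x0 + (y *m B)^T.

Definition families_general_position {R : realType} (nin n1 T : nat)
  (u0 : 'cV[R]_n1) (beta theta : R) (W : 'M[R]_(n1, nin)) (b : 'cV[R]_n1) : Prop :=
  forall (c : 'I_n1 -> hyp_index T) (P : {set 'I_n1}),
    let I := fun x => forall k, k \in P -> hyperplane u0 beta theta W b k (c k) x in
    if (nin < #|P|)%N then (forall x, ~ I x)
    else affine_subspace_dim (nin - #|P|) I.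

(* Take the rows w_k = (1, a_k, ..., a_k^(d-1)) at distinct nodes a_k = k and
   biases b_k = -L a_k^d.  Reading x as the polynomial p_x of degree < d, the
   hyperplane of neuron k with threshold g becomes p_x(a_k) - L a_k^d = g.
   For p <= d chosen hyperplanes, Lagrange interpolation shows that the
   solutions form p_0 + Z_P * {polynomials of degree < d - p}, with Z_P the
   monic polynomial vanishing at the chosen nodes: an affine subspace of
   dimension d - p, whatever L is.  For p > d, a common point yields a
   polynomial p_x - L X^d of degree <= d taking p prescribed values, which
   determines its coefficient -L; so each of the finitely many choices of
   hyperplanes forbids at most one value of L, and any other L works. *)

From HB Require Import structures.
From mathcomp Require Import all_boot all_order all_algebra.
From mathcomp Require Import reals boolp.
Set Implicit Arguments.
Unset Strict Implicit.
Unset Printing Implicit Defensive.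
Import Order.TTheory GRing.Theory Num.Theory.
Local Open Scope ring_scope.

Section NodeInterpolation.
Variables (R : numFieldType) (n : nat).
Implicit Types (P : {set 'I_n}) (p : {poly R}).

Definition node (k : 'I_n) : R := k%:R.

Definition nodes P : seq R := map node (enum P).

Definition node_poly P : {poly R} := \prod_(z <- nodes P) ('X - z%:P).

Lemma node_inj : injective node.
Proof. by move=> i j /eqP; rewrite eqr_nat => /eqP /val_inj. Qed.

Lemma uniq_nodes P : uniq (nodes P).
Proof. by rewrite map_inj_uniq ?enum_uniq //; apply: node_inj. Qed.

Lemma size_nodes P : size (nodes P) = #|P|.
Proof. by rewrite size_map -cardE. Qed.

Lemma mem_nodes P k : (node k \in nodes P) = (k \in P).
Proof. by rewrite (mem_map node_inj) mem_enum. Qed.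

Lemma all_root_nodes P p :
  {in P, forall k, root p (node k)} -> all (root p) (nodes P).
Proof.
by move=> rootP; apply/allP => _ /mapP [k + ->]; rewrite mem_enum; apply: rootP.
Qed.

Lemma size_node_poly P : size (node_poly P) = #|P|.+1.
Proof. by rewrite size_prod_XsubC size_nodes. Qed.

Lemma monic_node_poly P : node_poly P \is monic.
Proof. exact: monic_prod_XsubC. Qed.

Lemma root_node_poly P k : root (node_poly P) (node k) = (k \in P).
Proof. by rewrite root_prod_XsubC mem_nodes. Qed.

Lemma node_poly_dvdp P p : {in P, forall k, root p (node k)} -> node_poly P %| p.
Proof.
by move=> rootP; apply: uniq_roots_dvdp; rewrite ?uniq_rootsE ?uniq_nodes ?all_root_nodes.
Qed.

Lemma poly_eq0_on_nodes P p :
  (size p <= #|P|)%N -> {in P, forall k, root p (node k)} -> p = 0.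
Proof.
move=> size_p rootP; apply/eqP; apply: contraLR size_p => p_neq0; rewrite -ltnNge.
by rewrite -(size_nodes P) max_poly_roots ?all_root_nodes ?uniq_nodes.
Qed.

Lemma lagrange_interpolation P (v : 'I_n -> R) :
  exists2 p : {poly R}, (size p <= #|P|)%N & {in P, forall k, p.[node k] = v k}.
Proof.
pose e k := node_poly (P :\ k).
exists (\sum_(k in P) (v k / (e k).[node k]) *: e k).
  apply: (big_ind (fun p : {poly R} => size p <= #|P|)%N); rewrite ?size_poly0 //.
    move=> p q size_p size_q.
    by rewrite (leq_trans (size_polyD _ _)) // geq_max size_p size_q.
  move=> k kP; rewrite (leq_trans (size_scale_leq _ _)) //.
  by rewrite size_node_poly (cardsD1 k P) kP.
move=> k kP; rewrite horner_sum (bigD1 k) //= big1 ?addr0 => [|j /andP[jP jk]].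
  by rewrite hornerZ divfK // -/(root _ _) root_node_poly setD11.
apply/eqP; rewrite hornerZ mulf_eq0 -/(root _ _) root_node_poly.
by rewrite in_setD1 kP andbT (eq_sym k) jk orbT.
Qed.

Lemma interpolation_lead_coef_unique d P p1 p2 (L1 L2 : R) :
  (d < #|P|)%N -> (size p1 <= d)%N -> (size p2 <= d)%N ->
  {in P, forall k, (p1 - L1 *: 'X^d).[node k] = (p2 - L2 *: 'X^d).[node k]} ->
  L1 = L2.
Proof.
move=> dP size_p1 size_p2 eq_on_P.
have size_subXn p (L : R) :
    (size p <= d)%N -> (size (p - L *: 'X^d)%R <= d.+1)%N.
  move=> size_p; rewrite (leq_trans (size_polyD _ _)) // geq_max size_polyN.
  by rewrite (leq_trans size_p) // (leq_trans (size_scale_leq _ _)) ?size_polyXn.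
have /(congr1 (coefp d)) : (p1 - L1 *: 'X^d) - (p2 - L2 *: 'X^d) = 0.
  apply: (@poly_eq0_on_nodes P); last first.
    by move=> k kP; rewrite /root hornerD hornerN eq_on_P ?subrr.
  rewrite (leq_trans (size_polyD _ _)) // geq_max size_polyN.
  by rewrite !(leq_trans _ dP) ?size_subXn.
rewrite /= !coefB !coefZ coefXn eqxx !mulr1 coef0 (nth_default _ size_p1).
rewrite (nth_default _ size_p2) !sub0r opprK addrC.
by move/eqP; rewrite subr_eq0 => /eqP.
Qed.

End NodeInterpolation.

Arguments node {R n}.
Arguments nodes {R n}.
Arguments node_poly {R n}.

Section ColumnPolynomials.
Variables (R : nzRingType) (d : nat).
Implicit Types (x y : 'cV[R]_d) (p q : {poly R}).

Definition poly_of_col x : {poly R} := rVpoly x^T.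

Lemma size_poly_of_col x : (size (poly_of_col x) <= d)%N.
Proof. exact: size_poly. Qed.

Lemma horner_poly_of_col x t : (poly_of_col x).[t] = \sum_(j < d) x j 0 * t ^+ j.
Proof.
rewrite (horner_coef_wide _ (size_poly_of_col x)).
by apply: eq_bigr => j _; rewrite coef_rVpoly_ord mxE.
Qed.

Lemma poly_of_col_inj : injective poly_of_col.
Proof. by move=> x y /(congr1 (@poly_rV R d)); rewrite !rVpolyK => /trmx_inj. Qed.

Lemma poly_of_colD x y : poly_of_col (x + y) = poly_of_col x + poly_of_col y.
Proof. by rewrite /poly_of_col linearD /= linearD. Qed.

Lemma poly_of_colK p : (size p <= d)%N -> poly_of_col (poly_rV p)^T = p.
Proof. by move=> size_p; rewrite /poly_of_col trmxK poly_rV_K. Qed.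

Definition mul_poly_mx m q : 'M[R]_(m, d) := \matrix_(i, j) ('X^i * q)`_j.

Lemma rVpoly_mul_poly_mx m q (y : 'rV[R]_m) :
  (m + size q <= d.+1)%N -> rVpoly (y *m mul_poly_mx m q) = rVpoly y * q.
Proof.
move=> size_mq; rewrite -[RHS](@poly_rV_K _ d); last first.
  rewrite (leq_trans (size_polyMleq _ _)) // -subn1 leq_subLR add1n.
  by rewrite (leq_trans _ size_mq) // leq_add2r size_poly.
apply: congr1; apply/rowP => j; rewrite !mxE [rVpoly y]poly_def mulr_suml coef_sum.
by apply: eq_bigr => i _; rewrite !mxE valK -scalerAl coefZ.
Qed.

End ColumnPolynomials.

Arguments mul_poly_mx {R d}.

Lemma affine_subspace_dim_ext (R : realType) d m (S S' : 'cV[R]_d -> Prop) :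
  (forall x, S x <-> S' x) -> affine_subspace_dim m S -> affine_subspace_dim m S'.
Proof.
move=> SS' [x0 [B [freeB SE]]]; exists x0, B; split=> // x.
by split=> [/SS'/SE | /SE/SS'].
Qed.

Lemma interpolation_affine (R : realType) n d (P : {set 'I_n}) (v : 'I_n -> R) :
  (#|P| <= d)%N ->
  affine_subspace_dim (d - #|P|)
    (fun x : 'cV[R]_d => {in P, forall k, (poly_of_col x).[node k] = v k}).
Proof.
move=> Pd; have [p0 size_p0 p0P] := lagrange_interpolation P v.
have size_p0d : (size p0 <= d)%N := leq_trans size_p0 Pd.
set m := (d - #|P|)%N; pose Z : {poly R} := node_poly P.
have size_mZ : (m + size Z <= d.+1)%N by rewrite size_node_poly addnS subnK.
have Z_neq0 : Z != 0 by rewrite monic_neq0 ?monic_node_poly.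
pose B : 'M[R]_(m, d) := mul_poly_mx m Z.
have col_mulE (y : 'rV_m) : poly_of_col (y *m B)^T = rVpoly y * Z.
  by rewrite /poly_of_col trmxK rVpoly_mul_poly_mx.
exists (poly_rV p0)^T, B; split.
  apply/inj_row_free => y yB0; apply: (can_inj rVpolyK); rewrite linear0.
  by apply: (mulIf Z_neq0); rewrite mul0r -(rVpoly_mul_poly_mx _ size_mZ) yB0 linear0.
move=> x; split=> [xP | [y ->] k kP].
  have Z_dvd : Z %| poly_of_col x - p0.
    apply: node_poly_dvdp => k kP.
    by rewrite /root hornerD hornerN xP // p0P // subrr.
  have size_q : (size ((poly_of_col x - p0) %/ Z)%R <= m)%N.
    rewrite size_divp // size_node_poly leq_sub2r //.
    by rewrite (leq_trans (size_polyD _ _)) // geq_max size_polyN size_poly_of_col.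
  exists (poly_rV ((poly_of_col x - p0) %/ Z)); apply: poly_of_col_inj.
  by rewrite poly_of_colD poly_of_colK // col_mulE poly_rV_K // divpK // addrC subrK.
rewrite poly_of_colD poly_of_colK // col_mulE hornerD hornerM p0P //.
have /rootP -> : root Z (node k) by rewrite root_node_poly.
by rewrite mulr0 addr0.
Qed.

Lemma exists_avoid_subsingletons (R : numDomainType) (I : finType)
    (bad : I -> R -> Prop) :
  (forall i L1 L2, bad i L1 -> bad i L2 -> L1 = L2) ->
  exists L, forall i, ~ bad i L.
Proof.
move=> bad_uniq.
have /choice [r r_bad] : forall i, exists r, forall L, bad i L -> r = L.
  move=> i; have [[L badL] | nobad] := pselect (exists L, bad i L).
    by exists L => L' /(bad_uniq _ _ _ badL).
  by exists 0 => L badL; case: nobad; exists L.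
exists (1 + \sum_i `|r i|) => i /r_bad r_i.
have : `|r i| <= \sum_j `|r j| by rewrite (bigD1 i) //= lerDl sumr_ge0.
by rewrite r_i ger0_norm ?addr_ge0 ?sumr_ge0 // gerDr ler10.
Qed.

Section VandermondeNeurons.
Variables (R : realType) (n d : nat).

Definition vandermonde_weights : 'M[R]_(n, d) := \matrix_(k, j) node k ^+ j.

Definition lead_bias (L : R) : 'cV[R]_n := \col_k (- L * node k ^+ d).

Lemma vandermonde_neuronE L k (x : 'cV[R]_d) :
  \sum_(j < d) vandermonde_weights k j * x j 0 + lead_bias L k 0
  = (poly_of_col x - L *: 'X^d).[node k].
Proof.
rewrite hornerD hornerN hornerZ hornerXn horner_poly_of_col mxE mulNr.
by congr (_ - _); apply: eq_bigr => j _; rewrite mxE mulrC.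
Qed.

End VandermondeNeurons.

Arguments vandermonde_weights {R n d}.
Arguments lead_bias {R n} d L.

Theorem parallel_families_general_position (R : realType) (n d : nat)
    (H : finType) (g : 'I_n -> H -> R) :
  exists (W : 'M[R]_(n, d)) (b : 'cV[R]_n),
    forall (c : 'I_n -> H) (P : {set 'I_n}),
    let I := fun x : 'cV[R]_d =>
      {in P, forall k, \sum_(j < d) W k j * x j 0 + b k 0 = g k (c k)} in
    if (d < #|P|)%N then forall x, ~ I x else affine_subspace_dim (d - #|P|) I.
Proof.
pose W : 'M[R]_(n, d) := vandermonde_weights.
pose solvable (L : R) (cP : {ffun 'I_n -> H} * {set 'I_n}) := (d < #|cP.2|)%N /\
  exists x : 'cV[R]_d, {in cP.2, forall k,
    \sum_(j < d) W k j * x j 0 + lead_bias d L k 0 = g k (cP.1 k)}.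
have [L L_ok] : exists L, forall cP, ~ solvable L cP.
  apply: exists_avoid_subsingletons => cP L1 L2 [dP [x1 x1P]] [_ [x2 x2P]].
  apply: (interpolation_lead_coef_unique dP (size_poly_of_col x1) (size_poly_of_col x2)).
  by move=> k kP; rewrite -!vandermonde_neuronE x1P ?x2P.
exists W, (lead_bias d L) => c P I; case: ifP => dP.
  move=> x Ix; apply: (L_ok (finfun c, P)); split=> //.
  by exists x => k kP; rewrite ffunE Ix.
have Pd : (#|P| <= d)%N by rewrite leqNgt dP.
apply: affine_subspace_dim_ext
  (interpolation_affine (fun k => g k (c k) + L * node k ^+ d) Pd) => x.
have neuronE k : \sum_(j < d) W k j * x j 0 + lead_bias d L k 0
                 = (poly_of_col x).[node k] - L * node k ^+ d.
  by rewrite vandermonde_neuronE hornerD hornerN hornerZ hornerXn.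
split=> xP k kP; apply/eqP; first by rewrite neuronE subr_eq xP.
by rewrite -subr_eq -neuronE xP.
Qed.

Theorem lemmaB17 (R : realType) (T nin n1 : nat) (u0 : 'cV[R]_n1) (beta theta : R) :
  0 <= beta -> beta <= 1 -> 0 < theta ->
  exists (W : 'M[R]_(n1, nin)) (b : 'cV[R]_n1),
    families_general_position T u0 beta theta W b.
Proof.
move=> _ _ _.
pose g k (h : hyp_index T) := thr beta theta (u0 k 0) (projT1 h) (projT2 h).
have [W [b Wb_gp]] := parallel_families_general_position nin g.
exists W, b => c P /=; have := Wb_gp c P; rewrite /hyperplane.
have hypE k x : (\sum_(j < nin) W k j * x j 0 + b k 0 = g k (c k)) <->
                (\sum_(j < nin) W k j * x j 0 + b k 0 - g k (c k) = 0).
  by split=> [-> | /eqP]; [rewrite subrr | rewrite subr_eq0 => /eqP].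
case: (nin < #|P|)%N => /= [empty x Ix | aff].
  by apply: (empty x) => k kP; apply/hypE/Ix.
by apply: affine_subspace_dim_ext aff => x; split=> Ix k kP; apply/hypE/Ix.
Qed.
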